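(* Fix a real number $\rho\ge 1$. For each positive integer $m$, let $L=2m+2\rho$ and consider the instance with one sensor at location $0$ with radius $\rho$ and $m$ sensors at locations $2k-1$ ($k=1,\dots,m$) with radius $1$. Let $A_m$ be the minimum cost of a feasible order-preserving solution and $O_m$ the minimum cost of a feasible solution of this instance. Then $A_m/O_m\to\rho$ as $m\to\infty$.
   Context: Barrier coverage problem: an instance consists of a barrier length $L>0$ and $n$ sensors; sensor $i$ has a location $x_i\in\mathbb{R}$ and a radius $r_i>0$. The sensors are indexed so that $x_1\le x_2\le\cdots\le x_n$. A solution is a vector $y\in\mathbb{R}^n$; sensor $i$ at $y_i$ covers $[y_i-r_i,y_i+r_i]$. The solution is feasible if $[0,L]\subseteq\bigcup_i [y_i-r_i,y_i+r_i]$; its cost is $\sum_i|y_i-x_i|$. A set $S$ is active for $y$ if $[0,L]\subseteq\bigcup_{i\in S}[y_i-r_i,y_i+r_i]$. A solution $y$ is order-preserving if it has an active set $S$ such that for all $i,j\in S$ with $i<j$ we have $y_i<y_j$. (In the instance, the ratio of largest to smallest radius is $\rho$.) *)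

From Stdlib Require Import Reals Lra.
Open Scope R_scope.

(* General barrier coverage instance with n sensors indexed 0..n-1
   (paper's indices 1..n shifted by one); locations x, radii r, barrier [0,L].
   A solution is y : nat -> R (only indices < n are relevant). *)

Fixpoint rsum (n : nat) (f : nat -> R) : R :=
  match n with
  | O => 0
  | S k => rsum k f + f k
  end.

Definition cost (n : nat) (x y : nat -> R) : R :=
  rsum n (fun i => Rabs (y i - x i)).

Definition active (n : nat) (r : nat -> R) (L : R) (y : nat -> R)
    (S : nat -> Prop) : Prop :=
  (forall i, S i -> (i < n)%nat) /\
  forall p, 0 <= p <= L -> exists i, S i /\ y i - r i <= p <= y i + r i.

Definition feasible (n : nat) (r : nat -> R) (L : R) (y : nat -> R) : Prop :=
  active n r L y (fun i => (i < n)%nat).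

Definition order_preserving (n : nat) (r : nat -> R) (L : R) (y : nat -> R)
    : Prop :=
  exists S : nat -> Prop, active n r L y S /\
    forall i j, S i -> S j -> (i < j)%nat -> y i < y j.

Definition is_inf (E : R -> Prop) (c : R) : Prop :=
  (forall z, E z -> c <= z) /\ (forall b, (forall z, E z -> b <= z) -> b <= c).

Definition inst_x (i : nat) : R := if Nat.eqb i 0 then 0 else 2 * INR i - 1.
Definition inst_r (rho : R) (i : nat) : R := if Nat.eqb i 0 then rho else 1.
Definition inst_L (rho : R) (m : nat) : R := 2 * INR m + 2 * rho.

Definition is_min_op_cost (rho : R) (m : nat) (c : R) : Prop :=
  is_inf (fun z => exists y, feasible (S m) (inst_r rho) (inst_L rho m) y /\
            order_preserving (S m) (inst_r rho) (inst_L rho m) y /\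
            z = cost (S m) inst_x y) c.

Definition is_min_cost (rho : R) (m : nat) (c : R) : Prop :=
  is_inf (fun z => exists y, feasible (S m) (inst_r rho) (inst_L rho m) y /\
            z = cost (S m) inst_x y) c.

From Stdlib Require Import Reals Lra Lia List Classical.
From Coquelicot Require Import Coquelicot.
Open Scope R_scope.

(* Both minima are linear in m up to a bounded error: 2m <= O_m <= 2m + rho and
   2 rho m <= A_m <= 2 rho m + rho, so A_m / O_m tends to rho.  The upper
   bounds are explicit placements: move the big sensor to the right end of the
   barrier, resp. keep it at rho and shift every unit sensor right by 2 rho
   (which preserves the order).  The lower bounds come from a moment argument:
   if closed intervals cover [0, L], then L^2/2, the integral of p over [0, L],
   is at most the sum over the intervals of the integral of max(p, 0), and a
   sensor at y of radius r contributes at most 2 r max(y, r).  For the unit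
   sensors this sums to at most 2 m^2 + 2 D, with D their total displacement.
   In an order-preserving solution either the big sensor is active, and then
   y_0 <= rho (it covers 0 itself, or a unit sensor at y_i <= 1 does and
   y_0 < y_i); or the unit sensors cover [0, L] on their own.  Either way
   D >= 2 rho m. *)

Definition sumR (l : list R) : R := fold_right Rplus 0 l.

Lemma sumR_app l1 l2 : sumR (l1 ++ l2) = sumR l1 + sumR l2.
Proof. induction l1 as [|x l1 IH]; simpl; [ring | rewrite IH; ring]. Qed.

Lemma sumR_map_nonneg {A} (f : A -> R) l :
  (forall x, In x l -> 0 <= f x) -> 0 <= sumR (map f l).
Proof.
  induction l as [|x l IH]; intros Hf; simpl; [lra|].
  pose proof (Hf x (or_introl eq_refl)).
  assert (0 <= sumR (map f l)) by (apply IH; intros; apply Hf; right; assumption).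
  lra.
Qed.

Lemma sumR_map_extract {A} (f : A -> R) l1 x l2 :
  sumR (map f (l1 ++ x :: l2)) = f x + sumR (map f (l1 ++ l2)).
Proof. rewrite !map_app, !sumR_app. simpl. ring. Qed.

Lemma rsum_ext n f g : (forall i, (i < n)%nat -> f i = g i) -> rsum n f = rsum n g.
Proof.
  induction n as [|n IH]; intros H; simpl; [reflexivity|].
  rewrite IH, H; [reflexivity | lia | intros; apply H; lia].
Qed.

Lemma rsum_le n f g : (forall i, (i < n)%nat -> f i <= g i) -> rsum n f <= rsum n g.
Proof.
  induction n as [|n IH]; intros H; simpl; [lra|].
  pose proof (IH (fun i Hi => H i ltac:(lia))). pose proof (H n ltac:(lia)). lra.
Qed.

Lemma rsum_const n c : rsum n (fun _ => c) = INR n * c.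
Proof. induction n as [|n IH]; simpl rsum; [simpl; ring | rewrite IH, S_INR; ring]. Qed.

Lemma rsum_nonneg n f : (forall i, (i < n)%nat -> 0 <= f i) -> 0 <= rsum n f.
Proof.
  intros H. replace 0 with (rsum n (fun _ => 0)) by (rewrite rsum_const; ring).
  apply rsum_le, H.
Qed.

Lemma rsum_plus_scal n c f g :
  rsum n (fun i => c * f i + c * g i) = c * rsum n f + c * rsum n g.
Proof. induction n as [|n IH]; simpl; [ring | rewrite IH; ring]. Qed.

Lemma rsum_shift n f : rsum (S n) f = f 0%nat + rsum n (fun i => f (S i)).
Proof.
  induction n as [|n IH]; [simpl; ring|].
  change (rsum (S (S n)) f) with (rsum (S n) f + f (S n)). rewrite IH. simpl. ring.
Qed.

Lemma sumR_map_seq (f : nat -> R) k n :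
  sumR (map f (seq k n)) = rsum n (fun i => f (k + i)%nat).
Proof.
  revert k. induction n as [|n IH]; intros k; [reflexivity|].
  rewrite rsum_shift. simpl. rewrite IH, Nat.add_0_r.
  f_equal. apply rsum_ext. intros i _. f_equal. lia.
Qed.

Section IntervalCover.

Variable G : R -> R.
Hypothesis G_nondecreasing : forall x y, x <= y -> G x <= G y.
Hypothesis G_left_continuous :
  forall x eps, 0 < eps -> exists d, 0 < d /\ G x - eps <= G (x - d).

Definition increment (I : R * R) : R := G (snd I) - G (fst I).

Definition covers (l : list (R * R)) (s t : R) : Prop :=
  forall p, s <= p <= t -> exists I, In I l /\ fst I <= p <= snd I.

Lemma increment_nonneg I : fst I <= snd I -> 0 <= increment I.
Proof. intros H. unfold increment. pose proof (G_nondecreasing _ _ H). lra. Qed.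

(* Take an interval [a, b] containing t.  If a <= s we are done; otherwise
   the remaining intervals cover [s, a - d] for every d > 0, and left
   continuity of G at a closes the gap. *)
Lemma covers_increment_bound l s t :
  (forall I, In I l -> fst I <= snd I) -> covers l s t ->
  G t - G s <= sumR (map increment l).
Proof.
  remember (length l) as n eqn:Hn. revert l s t Hn.
  induction n as [n IH] using (well_founded_induction Wf_nat.lt_wf).
  intros l s t Hn Hnondeg Hcov.
  assert (Hsum_nonneg : forall l', (forall I, In I l' -> In I l) ->
            0 <= sumR (map increment l')).
  { intros l' Hsub. apply sumR_map_nonneg.
    intros I HI. apply increment_nonneg, Hnondeg, Hsub, HI. }
  destruct (Rlt_le_dec t s) as [Hts | Hst].
  { pose proof (G_nondecreasing _ _ (Rlt_le _ _ Hts)).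
    pose proof (Hsum_nonneg l (fun I HI => HI)). lra. }
  destruct (Hcov t (conj Hst (Rle_refl t))) as [[a b] [HI [Hat Htb]]]; simpl in Hat, Htb.
  destruct (in_split _ _ HI) as [l1 [l2 ->]].
  rewrite sumR_map_extract. unfold increment at 1. simpl.
  assert (Hrest : forall I, In I (l1 ++ l2) -> In I (l1 ++ (a, b) :: l2)).
  { intros I HI'. apply in_or_app. apply in_app_or in HI'. simpl. tauto. }
  pose proof (Hsum_nonneg _ Hrest) as Hrest_nonneg.
  pose proof (G_nondecreasing _ _ Htb).
  destruct (Rle_lt_dec a s) as [Has | Hsa].
  { pose proof (G_nondecreasing _ _ Has). lra. }
  apply Rle_plus_epsilon. intros eps Heps.
  destruct (G_left_continuous a eps Heps) as [d [Hd HGd]].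
  assert (Hleft : G (a - d) - G s <= sumR (map increment (l1 ++ l2))).
  { apply (IH (length (l1 ++ l2))); [| reflexivity | |].
    - subst n. rewrite !length_app. simpl. lia.
    - intros I HI'. apply Hnondeg, Hrest, HI'.
    - intros p Hp. destruct (Hcov p ltac:(lra)) as [J [HJ Hpj]].
      exists J. split; [|exact Hpj].
      apply in_app_or in HJ as [HJ | [<- | HJ]]; simpl in Hpj; [apply in_or_app; tauto | lra |].
      apply in_or_app; tauto. }
  lra.
Qed.

End IntervalCover.

Definition pos_moment (t : R) : R := Rsqr (Rmax t 0) / 2.

Lemma pos_moment_nondecreasing x y : x <= y -> pos_moment x <= pos_moment y.
Proof.
  intros H. unfold pos_moment, Rsqr, Rmax.
  destruct (Rle_dec x 0), (Rle_dec y 0); nra.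
Qed.

Lemma pos_moment_increment_le x d : 0 <= d ->
  pos_moment x - pos_moment (x - d) <= d * Rmax x 0.
Proof.
  intros H. unfold pos_moment, Rsqr, Rmax.
  destruct (Rle_dec x 0), (Rle_dec (x - d) 0); nra.
Qed.

Lemma pos_moment_left_continuous x eps : 0 < eps ->
  exists d, 0 < d /\ pos_moment x - eps <= pos_moment (x - d).
Proof.
  intros Heps. pose proof (Rmax_r x 0) as Hp. set (p := Rmax x 0) in *.
  assert (Hd : 0 < eps / (p + 1)) by (apply Rdiv_lt_0_compat; lra).
  exists (eps / (p + 1)). split; [exact Hd|].
  assert (Hdp : eps / (p + 1) * p <= eps).
  { replace (eps / (p + 1) * p) with (eps - eps / (p + 1)) by (field; lra). lra. }
  pose proof (pos_moment_increment_le x _ (Rlt_le _ _ Hd)) as Hinc. fold p in Hinc. lra.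
Qed.

Lemma pos_moment_sensor y r : 0 <= r ->
  pos_moment (y + r) - pos_moment (y - r) <= 2 * r * Rmax y r.
Proof.
  intros H. unfold pos_moment, Rsqr, Rmax.
  destruct (Rle_dec (y + r) 0), (Rle_dec (y - r) 0), (Rle_dec y r); nra.
Qed.

Lemma pos_moment_span L : 0 <= L -> pos_moment L - pos_moment 0 = L * L / 2.
Proof.
  intros H. unfold pos_moment, Rsqr, Rmax.
  destruct (Rle_dec L 0), (Rle_dec 0 0); nra.
Qed.

Definition sensor_interval (r y : nat -> R) (i : nat) : R * R := (y i - r i, y i + r i).

Lemma sensor_intervals_nondegenerate (r y : nat -> R) idx :
  (forall i, 0 <= r i) ->
  forall I, In I (map (sensor_interval r y) idx) -> fst I <= snd I.
Proof.
  intros Hr I HI. apply in_map_iff in HI as [i [<- _]]. simpl. pose proof (Hr i). lra.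
Qed.

Lemma active_covers n r L y P idx : active n r L y P ->
  (forall i, P i -> In i idx) -> covers (map (sensor_interval r y) idx) 0 L.
Proof.
  intros [_ Hcov] Hidx p Hp. destruct (Hcov p Hp) as [i [HPi Hpi]].
  exists (sensor_interval r y i). split; [apply in_map, Hidx, HPi | exact Hpi].
Qed.

Lemma covers_moment l L : 0 <= L -> (forall I, In I l -> fst I <= snd I) ->
  covers l 0 L -> L * L / 2 <= sumR (map (increment pos_moment) l).
Proof.
  intros HL Hnondeg Hcov. rewrite <- pos_moment_span by exact HL.
  apply covers_increment_bound;
    [exact pos_moment_nondecreasing | exact pos_moment_left_continuous | exact Hnondeg | exact Hcov].
Qed.

Lemma is_lim_seq_inv_INR : is_lim_seq (fun n => / INR n) 0.
Proof.
  replace (Finite 0) with (Rbar_inv p_infty) by reflexivity.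
  apply is_lim_seq_inv; [exact is_lim_seq_INR | discriminate].
Qed.

Lemma is_lim_seq_div_INR (u : nat -> R) (a C : R) :
  (forall n, (1 <= n)%nat -> a * INR n <= u n <= a * INR n + C) ->
  is_lim_seq (fun n => u n / INR n) a.
Proof.
  intros Hu.
  assert (Hupper : is_lim_seq (fun n => a + C * / INR n) a).
  { pose proof (is_lim_seq_plus' _ _ _ _ (is_lim_seq_const a)
                  (is_lim_seq_scal_l _ C 0 is_lim_seq_inv_INR)) as H.
    simpl in H. rewrite Rmult_0_r, Rplus_0_r in H. exact H. }
  apply (is_lim_seq_le_le_loc (fun _ => a) _ (fun n => a + C * / INR n));
    [| apply is_lim_seq_const | exact Hupper].
  exists 1%nat. intros n Hn. destruct (Hu n Hn) as [Hlo Hhi].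
  assert (Hpos : 0 < INR n) by (apply lt_0_INR; lia).
  replace (u n / INR n) with (a + (u n - a * INR n) * / INR n) by (field; lra).
  assert (0 < / INR n) by (apply Rinv_0_lt_compat, Hpos).
  split; [| apply Rplus_le_compat_l, Rmult_le_compat_r]; nra.
Qed.

Lemma Un_cv_ratio_of_linear_growth (u v : nat -> R) (a b C : R) : 0 < b ->
  (forall n, (1 <= n)%nat -> a * INR n <= u n <= a * INR n + C) ->
  (forall n, (1 <= n)%nat -> b * INR n <= v n <= b * INR n + C) ->
  Un_cv (fun n => u n / v n) (a / b).
Proof.
  intros Hb Hu Hv. apply is_lim_seq_Reals.
  apply (is_lim_seq_ext_loc (fun n => (u n / INR n) / (v n / INR n))).
  - exists 1%nat. intros n Hn. destruct (Hv n Hn) as [Hvn _].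
    assert (0 < INR n) by (apply lt_0_INR; lia).
    assert (0 < v n) by nra.
    field. lra.
  - apply is_lim_seq_div'; [exact (is_lim_seq_div_INR u a C Hu)
                          | exact (is_lim_seq_div_INR v b C Hv) | lra].
Qed.

Lemma inst_x_unit k : inst_x (S k) = 2 * INR (S k) - 1.
Proof. reflexivity. Qed.

Lemma inst_r_big rho : inst_r rho 0 = rho.
Proof. reflexivity. Qed.

Lemma inst_r_unit rho k : inst_r rho (S k) = 1.
Proof. reflexivity. Qed.

Definition unit_displacement (m : nat) (y : nat -> R) : R :=
  rsum m (fun k => Rabs (y (S k) - inst_x (S k))).

Lemma unit_displacement_nonneg m y : 0 <= unit_displacement m y.
Proof. apply rsum_nonneg. intros. apply Rabs_pos. Qed.

Lemma cost_split m y : cost (S m) inst_x y = Rabs (y 0%nat) + unit_displacement m y.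
Proof.
  unfold cost. rewrite rsum_shift. change (inst_x 0%nat) with 0.
  rewrite Rminus_0_r. reflexivity.
Qed.

Lemma rsum_unit_locations m : rsum m (fun k => inst_x (S k)) = INR m * INR m.
Proof.
  induction m as [|m IH]; [simpl; ring|].
  simpl rsum. rewrite IH, inst_x_unit, !S_INR. ring.
Qed.

Lemma units_moment_le rho m y :
  sumR (map (increment pos_moment) (map (sensor_interval (inst_r rho) y) (seq 1 m)))
  <= 2 * (INR m * INR m) + 2 * unit_displacement m y.
Proof.
  rewrite map_map, sumR_map_seq, <- rsum_unit_locations.
  unfold unit_displacement. rewrite <- rsum_plus_scal.
  apply rsum_le. intros k _. unfold increment, sensor_interval. simpl fst. simpl snd.
  rewrite inst_r_unit.
  assert (Hx : 1 <= inst_x (S k)).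
  { rewrite inst_x_unit, S_INR. pose proof (pos_INR k). lra. }
  pose proof (pos_moment_sensor (y (S k)) 1 Rle_0_1).
  pose proof (Rle_abs (y (S k) - inst_x (S k))).
  pose proof (Rabs_pos (y (S k) - inst_x (S k))).
  assert (Rmax (y (S k)) 1 <= inst_x (S k) + Rabs (y (S k) - inst_x (S k)))
    by (apply Rmax_lub; lra).
  lra.
Qed.

Lemma inst_r_nonneg rho i : 0 <= rho -> 0 <= inst_r rho i.
Proof. intros H. unfold inst_r. destruct (Nat.eqb i 0); lra. Qed.

Lemma inst_L_nonneg rho m : 0 <= rho -> 0 <= inst_L rho m.
Proof. intros H. unfold inst_L. pose proof (pos_INR m). lra. Qed.

Lemma units_cover_displacement rho m y : 0 <= rho ->
  covers (map (sensor_interval (inst_r rho) y) (seq 1 m)) 0 (inst_L rho m) ->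
  2 * rho * INR m + rho * rho <= unit_displacement m y.
Proof.
  intros Hrho Hcov.
  pose proof (covers_moment _ _ (inst_L_nonneg rho m Hrho)
    (sensor_intervals_nondegenerate _ y _ (fun i => inst_r_nonneg rho i Hrho)) Hcov).
  pose proof (units_moment_le rho m y). unfold inst_L in *. nra.
Qed.

Lemma sensors_cover_displacement rho m y : 0 <= rho ->
  covers (map (sensor_interval (inst_r rho) y) (seq 0 (S m))) 0 (inst_L rho m) ->
  2 * rho * INR m + rho * rho <= rho * Rmax (y 0%nat) rho + unit_displacement m y.
Proof.
  intros Hrho Hcov.
  pose proof (covers_moment _ _ (inst_L_nonneg rho m Hrho)
    (sensor_intervals_nondegenerate _ y _ (fun i => inst_r_nonneg rho i Hrho)) Hcov) as Hmoment.
  change (seq 0 (S m)) with (0%nat :: seq 1 m) in Hmoment.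
  rewrite !map_cons in Hmoment. change (sumR (?x :: ?l)) with (x + sumR l) in Hmoment.
  assert (Hbig : increment pos_moment (sensor_interval (inst_r rho) y 0)
                 <= 2 * rho * Rmax (y 0%nat) rho) by exact (pos_moment_sensor _ _ Hrho).
  pose proof (units_moment_le rho m y). unfold inst_L in Hmoment. nra.
Qed.

Lemma feasible_cost_ge rho m y : 1 <= rho ->
  feasible (S m) (inst_r rho) (inst_L rho m) y -> 2 * INR m <= cost (S m) inst_x y.
Proof.
  intros Hrho Hfeas.
  assert (Hcov : covers (map (sensor_interval (inst_r rho) y) (seq 0 (S m))) 0 (inst_L rho m)).
  { apply (active_covers _ _ _ _ _ _ Hfeas). intros i Hi. apply in_seq. lia. }
  pose proof (sensors_cover_displacement rho m y ltac:(lra) Hcov).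
  rewrite cost_split. pose proof (pos_INR m).
  pose proof (Rle_abs (y 0%nat)). pose proof (Rabs_pos (y 0%nat)).
  destruct (Rle_lt_dec (y 0%nat) rho) as [Hle | Hlt].
  - rewrite Rmax_right in * by exact Hle. nra.
  - rewrite Rmax_left in * by lra.
    pose proof (unit_displacement_nonneg m y).
    destruct (Rle_lt_dec (2 * INR m) (y 0%nat)); [lra|].
    pose proof (Rmult_le_pos (rho - 1) (2 * INR m - y 0%nat) ltac:(lra) ltac:(lra)). nra.
Qed.

Lemma order_preserving_cost_ge rho m y : 1 <= rho ->
  order_preserving (S m) (inst_r rho) (inst_L rho m) y ->
  2 * rho * INR m <= cost (S m) inst_x y.
Proof.
  intros Hrho [P [Hact Hord]].
  rewrite cost_split. pose proof (Rabs_pos (y 0%nat)).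
  destruct (classic (P 0%nat)) as [HP0 | HP0].
  - assert (Hy0 : y 0%nat <= rho).
    { destruct Hact as [HPn Hcov0].
      destruct (Hcov0 0 (conj (Rle_refl 0) (inst_L_nonneg rho m ltac:(lra)))) as [i [HPi Hi]].
      destruct i as [|i]; [rewrite inst_r_big in Hi; lra|].
      pose proof (Hord 0%nat (S i) HP0 HPi ltac:(lia)).
      rewrite inst_r_unit in Hi. lra. }
    assert (Hcov : covers (map (sensor_interval (inst_r rho) y) (seq 0 (S m))) 0 (inst_L rho m)).
    { apply (active_covers _ _ _ _ _ _ Hact). intros i Hi. apply in_seq.
      destruct Hact as [HPn _]. pose proof (HPn i Hi). lia. }
    pose proof (sensors_cover_displacement rho m y ltac:(lra) Hcov).
    rewrite Rmax_right in * by exact Hy0. nra.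
  - assert (Hcov : covers (map (sensor_interval (inst_r rho) y) (seq 1 m)) 0 (inst_L rho m)).
    { apply (active_covers _ _ _ _ _ _ Hact). intros i Hi. apply in_seq.
      destruct Hact as [HPn _]. pose proof (HPn i Hi).
      destruct i as [|i]; [contradiction | lia]. }
    pose proof (units_cover_displacement rho m y ltac:(lra) Hcov). nra.
Qed.

Lemma unit_grid_cover m p : 0 <= p <= 2 * INR (S m) ->
  exists k, (k < S m)%nat /\ 2 * INR k <= p <= 2 * INR k + 2.
Proof.
  induction m as [|m IH]; intros Hp.
  - exists 0%nat. split; [lia|]. simpl in *. lra.
  - destruct (Rle_dec p (2 * INR (S m))) as [Hle | Hgt].
    + destruct (IH (conj (proj1 Hp) Hle)) as [k [Hk Hpk]]. exists k. split; [lia | exact Hpk].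
    + exists (S m). split; [lia|]. rewrite (S_INR (S m)) in Hp. lra.
Qed.

Definition big_right_placement (rho : R) (m i : nat) : R :=
  match i with O => 2 * INR m + rho | S _ => inst_x i end.

Definition shifted_placement (rho : R) (i : nat) : R :=
  match i with O => rho | S _ => inst_x i + 2 * rho end.

Lemma big_right_placement_feasible rho m : 0 <= rho -> (1 <= m)%nat ->
  feasible (S m) (inst_r rho) (inst_L rho m) (big_right_placement rho m).
Proof.
  intros Hrho Hm. split; [auto|]. intros p Hp. unfold inst_L in Hp.
  destruct (Rle_dec (2 * INR m) p).
  - exists 0%nat. split; [lia|]. rewrite inst_r_big. simpl. lra.
  - destruct m as [|m]; [lia|].
    destruct (unit_grid_cover m p) as [k [Hk Hpk]]; [lra|].
    exists (S k). split; [lia|]. rewrite inst_r_unit. simpl big_right_placement.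
    rewrite inst_x_unit, S_INR. lra.
Qed.

Lemma shifted_placement_feasible rho m : 0 <= rho -> (1 <= m)%nat ->
  feasible (S m) (inst_r rho) (inst_L rho m) (shifted_placement rho).
Proof.
  intros Hrho Hm. split; [auto|]. intros p Hp. unfold inst_L in Hp.
  destruct (Rle_dec p (2 * rho)).
  - exists 0%nat. split; [lia|]. rewrite inst_r_big. simpl. lra.
  - destruct m as [|m]; [lia|].
    destruct (unit_grid_cover m (p - 2 * rho)) as [k [Hk Hpk]]; [lra|].
    exists (S k). split; [lia|]. rewrite inst_r_unit. simpl shifted_placement.
    rewrite inst_x_unit, S_INR. lra.
Qed.

Lemma shifted_placement_order_preserving rho m : 0 <= rho -> (1 <= m)%nat ->
  order_preserving (S m) (inst_r rho) (inst_L rho m) (shifted_placement rho).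
Proof.
  intros Hrho Hm. exists (fun i => (i < S m)%nat).
  split; [exact (shifted_placement_feasible rho m Hrho Hm)|].
  intros i j _ _ Hij. destruct j as [|j]; [lia|].
  destruct i as [|i]; simpl shifted_placement; rewrite !inst_x_unit.
  - rewrite S_INR. pose proof (pos_INR j). lra.
  - assert (INR (S i) < INR (S j)) by (apply lt_INR; lia). lra.
Qed.

Lemma big_right_placement_cost rho m : 0 <= rho ->
  cost (S m) inst_x (big_right_placement rho m) = 2 * INR m + rho.
Proof.
  intros Hrho. rewrite cost_split. unfold unit_displacement.
  rewrite (rsum_ext m _ (fun _ => 0)), rsum_const.
  - simpl. pose proof (pos_INR m). rewrite Rabs_right by lra. ring.
  - intros k _. simpl. rewrite Rminus_diag. apply Rabs_R0.
Qed.

Lemma shifted_placement_cost rho m : 0 <= rho ->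
  cost (S m) inst_x (shifted_placement rho) = 2 * rho * INR m + rho.
Proof.
  intros Hrho. rewrite cost_split. unfold unit_displacement.
  rewrite (rsum_ext m _ (fun _ => 2 * rho)), rsum_const.
  - simpl. rewrite Rabs_right by lra. ring.
  - intros k _. simpl. replace (inst_x (S k) + 2 * rho - inst_x (S k)) with (2 * rho) by ring.
    apply Rabs_right. lra.
Qed.

Lemma min_cost_bounds rho m c : 1 <= rho -> (1 <= m)%nat -> is_min_cost rho m c ->
  2 * INR m <= c <= 2 * INR m + rho.
Proof.
  intros Hrho Hm [Hlow Hgreatest]. split.
  - apply Hgreatest. intros z [y [Hfeas ->]]. exact (feasible_cost_ge rho m y Hrho Hfeas).
  - rewrite <- (big_right_placement_cost rho m ltac:(lra)). apply Hlow.
    exists (big_right_placement rho m).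
    split; [exact (big_right_placement_feasible rho m ltac:(lra) Hm) | reflexivity].
Qed.

Lemma min_op_cost_bounds rho m c : 1 <= rho -> (1 <= m)%nat -> is_min_op_cost rho m c ->
  2 * rho * INR m <= c <= 2 * rho * INR m + rho.
Proof.
  intros Hrho Hm [Hlow Hgreatest]. split.
  - apply Hgreatest. intros z [y [_ [Hop ->]]].
    exact (order_preserving_cost_ge rho m y Hrho Hop).
  - rewrite <- (shifted_placement_cost rho m ltac:(lra)). apply Hlow.
    exists (shifted_placement rho).
    split; [exact (shifted_placement_feasible rho m ltac:(lra) Hm)|].
    split; [exact (shifted_placement_order_preserving rho m ltac:(lra) Hm) | reflexivity].
Qed.

Theorem lemma5 (rho : R) (A O : nat -> R) :
  1 <= rho ->
  (forall m : nat, (1 <= m)%nat -> is_min_op_cost rho m (A m)) ->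
  (forall m : nat, (1 <= m)%nat -> is_min_cost rho m (O m)) ->
  Un_cv (fun m => A m / O m) rho.
Proof.
  intros Hrho HA HO.
  replace rho with (2 * rho / 2) by field.
  apply (Un_cv_ratio_of_linear_growth A O (2 * rho) 2 rho); [lra | |];
    intros n Hn; [apply min_op_cost_bounds | apply min_cost_bounds]; auto.
Qed.
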